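(* Let $\mathbb{P}$ be a nonlocal (non-signalling) box, and for $x,y\in\{0,1\}$ let $\eta_{x,y}:=2\,\mathbb{P}(a\oplus b=xy\mid x,y)-1=2\sum_{c\in\{0,1\}}\mathbb{P}(c,c\oplus xy\mid x,y)-1\in[-1,1]$. Define $$A:=(\eta_{0,0}+\eta_{0,1}+\eta_{1,0}+\eta_{1,1})^2,\qquad B:=2\eta_{0,0}^2+4\eta_{0,1}\eta_{1,0}+2\eta_{1,1}^2.$$ If $A+B>16$, then $\mathbb{P}$ collapses communication complexity: there exists a constant $p>1/2$ (depending only on $\mathbb{P}$) such that for all $n,m\ge 1$ and every Boolean function $f:\{0,1\}^n\times\{0,1\}^m\to\{0,1\}$, we have $\mathtt{CC}^p(f)\le 1$ when Alice and Bob are allowed arbitrarily many shared random bits and arbitrarily many copies of $\mathbb{P}$.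
   Context: A nonlocal box (NLB) is a conditional probability distribution $\mathbb{P}(a,b\mid x,y)$ on outputs $a,b\in\{0,1\}$ given inputs $x,y\in\{0,1\}$ satisfying the non-signalling conditions $\sum_{\tilde b}\mathbb{P}(a,\tilde b\mid x,0)=\sum_{\tilde b}\mathbb{P}(a,\tilde b\mid x,1)$ and $\sum_{\tilde a}\mathbb{P}(\tilde a,b\mid 0,y)=\sum_{\tilde a}\mathbb{P}(\tilde a,b\mid 1,y)$ for all $a,b,x,y$. Alice has access to the input $x$/output $a$ side and Bob to the input $y$/output $b$ side; each copy of the box can be used once, each party receiving their output immediately after inputting, regardless of the other's action. Here $\oplus$ denotes addition mod 2. Communication complexity game: given a known $f:\{0,1\}^n\times\{0,1\}^m\to\{0,1\}$, Alice receives $X\in\{0,1\}^n$ and Bob receives $Y\in\{0,1\}^m$; they are spacelike separated, may use shared randomness and copies of the box, and Bob may send communication bits to Alice; Alice must output a bit $a'$ with the goal $a'=f(X,Y)$. For $p\in[0,1]$, $\mathtt{CC}^p(f)$ is the minimal number of communication bits required so that Alice's answer is correct with probability at least $p$ for every pair $(X,Y)$. Communication complexity collapses (with respect to the allowed resources) if there exists $p>1/2$ such that $\mathtt{CC}^p(f)\le 1$ for all Boolean functions $f$. *)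

From HB Require Import structures.
From mathcomp Require Import all_boot all_order all_algebra.
From mathcomp Require Import reals.
Set Implicit Arguments. Unset Strict Implicit. Unset Printing Implicit Defensive.
Import Order.TTheory GRing.Theory Num.Theory.
Local Open Scope ring_scope.

(* A box: [P a b x y] = P(a,b | x,y). *)
Definition box (R : realType) := bool -> bool -> bool -> bool -> R.

Definition is_nonlocal_box (R : realType) (P : box R) : Prop :=
  (forall a b x y, 0 <= P a b x y) /\
  (forall x y, \sum_(a : bool) \sum_(b : bool) P a b x y = 1) /\
  (forall a x, \sum_(b : bool) P a b x false = \sum_(b : bool) P a b x true) /\
  (forall b y, \sum_(a : bool) P a b false y = \sum_(a : bool) P a b true y).

Definition eta (R : realType) (P : box R) (x y : bool) : R :=
  2 * (\sum_(c : bool) P c (addb c (x && y)) x y) - 1.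

Definition quantA (R : realType) (P : box R) : R :=
  (eta P false false + eta P false true + eta P true false + eta P true true) ^+ 2.

Definition quantB (R : realType) (P : box R) : R :=
  2 * eta P false false ^+ 2 + 4 * (eta P false true * eta P true false)
  + 2 * eta P true true ^+ 2.

(* Vectors of box outputs for N copies; [trunc i v] keeps only the entries
   with index < i (the outputs already obtained before using copy i). *)
Definition outvec (N : nat) := {ffun 'I_N -> bool}.
Definition trunc (N : nat) (i : nat) (v : outvec N) : outvec N :=
  [ffun j : 'I_N => if (j < i)%N then v j else false].

(* Bob uses copies 0..N-1 in order, his input to copy i depending on Y, r and
   his previous outputs; he then sends one bit to Alice, computed from Y, r
   and all his outputs.  Alice then uses copies 0..N-1 in order, her input
   to copy i depending on X, r, the received bit and her previous outputs,
   and finally outputs a bit. *)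
Record protocol (n m N k : nat) := Protocol {
  bob_in : {ffun 'I_m -> bool} -> {ffun 'I_k -> bool} -> 'I_N -> outvec N -> bool;
  bob_msg : {ffun 'I_m -> bool} -> {ffun 'I_k -> bool} -> outvec N -> bool;
  alice_in : {ffun 'I_n -> bool} -> {ffun 'I_k -> bool} -> bool -> 'I_N -> outvec N -> bool;
  alice_out : {ffun 'I_n -> bool} -> {ffun 'I_k -> bool} -> bool -> outvec N -> bool
}.

Definition success_prob (R : realType) (P : box R) (n m N k : nat)
    (f : {ffun 'I_n -> bool} -> {ffun 'I_m -> bool} -> bool)
    (pr : protocol n m N k) (X : {ffun 'I_n -> bool}) (Y : {ffun 'I_m -> bool}) : R :=
  (2 ^+ k)^-1 *
  \sum_(r : {ffun 'I_k -> bool}) \sum_(b : outvec N) \sum_(a : outvec N)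
    let c := bob_msg pr Y r b in
    (\prod_(i : 'I_N) P (a i) (b i) (alice_in pr X r c i (trunc i a))
                                     (bob_in pr Y r i (trunc i b)))
    * (if alice_out pr X r c a == f X Y then 1 else 0).

Definition CC_le_one (R : realType) (P : box R) (p : R) (n m : nat)
    (f : {ffun 'I_n -> bool} -> {ffun 'I_m -> bool} -> bool) : Prop :=
  exists (N k : nat) (pr : protocol n m N k),
    forall X Y, p <= success_prob P f pr X Y.

From Pilot Require Import Defs.
From HB Require Import structures.
From mathcomp Require Import all_boot all_order all_algebra.
From mathcomp Require Import reals.
From mathcomp Require Import ring lra.
Set Implicit Arguments. Unset Strict Implicit. Unset Printing Implicit Defensive.
Import Order.TTheory GRing.Theory Num.Theory.
Local Open Scope ring_scope.

(* Alice and Bob first produce bits whose XOR equals f(X,Y) with bias 2^-m: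
   they read a guess for Y off m shared coins, Alice's share is f(X, guess), and
   Bob's share is 0 if the guess is right and a fresh shared coin otherwise.
   Three independent such sharings are combined into a sharing of their majority
   maj(e1,e2,e3) = e1 + (e1 + e2)(e1 + e3), the AND being computed with two boxes
   whose inputs are masked by two shared coins.  If the three sharings have bias
   d, the sharing of the majority has bias
     g(d) = d ((A + B)/16 - (A - B)/16 d^2).
   Since A <= 16 < A + B, g(d) >= kappa d with kappa > 1 for small d, while g is
   bounded below by some c > 0 on the rest of (0,1].  Hence a majority tree of
   depth O(m) reaches bias at least c, whatever f, n and m are; Bob sends his
   share and Alice outputs the XOR of the shares, which is correct with
   probability at least (1 + c)/2. *)

Lemma cubic_dichotomy (R : realFieldType) (h a : R) :
  1 < h -> a < h ->
  exists kap c : R, 1 < kap /\ 0 < c /\ forall d, 0 < d <= 1 ->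
    c <= d * (h - a * d ^+ 2) \/ kap * d <= d * (h - a * d ^+ 2).
Proof.
move=> h_gt1 a_lt_h.
pose d1 := (h - 1) / (2 * h); pose mu := (h - a) / (h - a + 1).
have d1_gt0 : 0 < d1 by rewrite divr_gt0 // ?mulr_gt0; lra.
have h_d1 : h * d1 = (h - 1) / 2 by rewrite /d1; field; lra.
have mu_gt0 : 0 < mu by rewrite divr_gt0 //; lra.
have mu_le1 : mu <= 1 by rewrite ler_pdivrMr; lra.
have mu_le : mu <= h - a by rewrite ler_pdivrMr; nra.
exists ((1 + h) / 2), (d1 * mu); split; first lra.
split; first exact: mulr_gt0.
move=> d /andP[d_gt0 d_le1].
have d2_le_d : d ^+ 2 <= d by rewrite expr2 ler_piMl // ltW.
have d2_ge0 : 0 <= d ^+ 2 by exact: sqr_ge0.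
have [d_le_d1|d1_lt_d] := lerP d d1; [right | left].
  rewrite mulrC ler_pM2l //.
  have : a * d ^+ 2 <= (h - 1) / 2; last lra.
  have [a_le0|a_gt0] := lerP a 0; first by nra.
  rewrite -h_d1; nra.
apply: ler_pM; [lra | lra | lra |].
have : 0 <= (h - mu) * (1 - d ^+ 2) by rewrite mulr_ge0 //; lra.
have : 0 <= (h - a - mu) * d ^+ 2 by rewrite mulr_ge0 //; lra.
lra.
Qed.

Lemma iterate_escape (R : realFieldType) (g : R -> R) (u : nat -> R) (kap c : R) :
  1 < kap -> 0 < c ->
  (forall d, 0 < d <= 1 -> c <= g d \/ kap * d <= g d) ->
  0 < u 0%N -> (forall n, u n.+1 = g (u n)) -> (forall n, u n <= 1) ->
  forall n, c <= kap ^+ n * u 0%N -> c <= u n.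
Proof.
move=> kap_gt1 c_gt0 g_dich u0_gt0 u_succ u_le1.
have escape n : c <= u n \/ kap ^+ n * u 0%N <= u n.
  elim: n => [|n [c_le|u_ge]]; first by right; rewrite expr0 mul1r.
  - have u_gt0 : 0 < u n by lra.
    left; rewrite u_succ; have [|//|g_ge] := g_dich (u n); first by rewrite u_gt0 u_le1.
    nra.
  - have u_gt0 : 0 < u n.
      by apply: lt_le_trans u_ge; rewrite mulr_gt0 // exprn_gt0 //; lra.
    rewrite u_succ; have [|g_ge|g_ge] := g_dich (u n); first by rewrite u_gt0 u_le1.
      by left.
    by right; rewrite exprS -mulrA; nra.
by move=> n c_le; have [|] := escape n; lra.
Qed.

Lemma expr_unbounded (R : archiRealFieldType) (kap x : R) :
  1 < kap -> 0 <= x -> exists n, x <= kap ^+ n.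
Proof.
move=> kap_gt1 x_ge0.
have bernoulli n : 1 + n%:R * (kap - 1) <= kap ^+ n.
  elim: n => [|n IHn]; first by rewrite mul0r addr0 expr0.
  have : kap * (1 + n%:R * (kap - 1)) <= kap * kap ^+ n by rewrite ler_wpM2l //; lra.
  have : 0 <= n%:R * (kap - 1) * (kap - 1) by rewrite !mulr_ge0 // ?ler0n; lra.
  by rewrite exprS -addn1 natrD; nra.
have kap1_gt0 : 0 < kap - 1 by lra.
exists (Num.Def.archi_bound (x / (kap - 1))).
have := archi_boundP (divr_ge0 x_ge0 (ltW kap1_gt0)).
rewrite ltr_pdivrMr //; have := bernoulli (Num.Def.archi_bound (x / (kap - 1))); lra.
Qed.

Definition majority (e1 e2 e3 : bool) : bool := e1 (+) (e1 (+) e2) && (e1 (+) e3).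

Lemma majority_shares s1 s2 s3 t1 t2 t3 r0 r1 :
  let uA := s1 (+) s2 (+) r0 in let vA := s1 (+) s3 (+) r1 in
  let uB := t1 (+) t2 (+) r0 in let vB := t1 (+) t3 (+) r1 in
  majority (s1 (+) t1) (s2 (+) t2) (s3 (+) t3) =
  s1 (+) uA && vA (+) (t1 (+) uB && vB) (+) uA && vB (+) vA && uB.
Proof.
by case: s1; case: s2; case: s3; case: t1; case: t2; case: t3; case: r0; case: r1.
Qed.

Lemma majority_sign_mean (R : numFieldType) (beta : bool -> bool -> R) (q : bool -> R) fv :
  q fv + q (~~ fv) = 1 ->
  \sum_(e1 : bool) \sum_(e2 : bool) \sum_(e3 : bool)
     (-1) ^+ (majority e1 e2 e3 (+) fv) * beta (e1 (+) e2) (e1 (+) e3) * (q e1 * q e2 * q e3) =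
  (q fv - q (~~ fv)) *
  (beta false false + (beta false true + beta true false + beta true true - beta false false) *
     ((1 - (q fv - q (~~ fv)) ^+ 2) / 4)).
Proof.
move=> sum1; have q_neg : q (~~ fv) = 1 - q fv by rewrite -sum1 addrAC subrr add0r.
rewrite q_neg; case: fv {sum1} q_neg => /= q_neg;
  by rewrite !big_bool /= q_neg /majority /=; field.
Qed.

(** * Means over shared coins and over sequential uses of the box *)

Section CoinMean.
Variable R : numFieldType.

Fixpoint coin_mean (k : nat) (G : seq bool -> R) : R :=
  if k is k'.+1 then 2^-1 * \sum_(h : bool) coin_mean k' (fun r => G (h :: r))
  else G [::].

Lemma coin_mean_ext k G G' :
  (forall r, size r = k -> G r = G' r) -> coin_mean k G = coin_mean k G'.
Proof.
elim: k G G' => [|k IHk] G G' eqG /=; first exact: eqG.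
congr (_ * _); apply: eq_bigr => h _; apply: IHk => r size_r.
by apply: eqG; rewrite /= size_r.
Qed.

Lemma eq_coin_mean k G G' : G =1 G' -> coin_mean k G = coin_mean k G'.
Proof. by move=> eqG; apply: coin_mean_ext. Qed.

Lemma coin_meanD k F G :
  coin_mean k (fun r => F r + G r) = coin_mean k F + coin_mean k G.
Proof.
elim: k F G => [|k IHk] F G //=.
by rewrite -mulrDr -big_split; congr (_ * _); apply: eq_bigr => h _; rewrite IHk.
Qed.

Lemma coin_meanZ k c G : coin_mean k (fun r => c * G r) = c * coin_mean k G.
Proof.
elim: k G => [|k IHk] G //=.
rewrite !mulr_sumr; apply: eq_bigr => h _.
by rewrite IHk mulrCA.
Qed.

Lemma coin_mean_cst k c : coin_mean k (fun _ => c) = c.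
Proof.
elim: k => [|k IHk] //=.
by rewrite big_bool /= IHk; field.
Qed.

Lemma coin_mean_ge0 k G : (forall r, 0 <= G r) -> 0 <= coin_mean k G.
Proof.
elim: k G => [|k IHk] G G_ge0 //=.
by rewrite mulr_ge0 ?invr_ge0 ?ler0n // sumr_ge0 // => h _; apply: IHk.
Qed.

Lemma coin_mean_cat k1 k2 G :
  coin_mean (k1 + k2) G = coin_mean k1 (fun r1 => coin_mean k2 (fun r2 => G (r1 ++ r2))).
Proof.
elim: k1 G => [|k1 IHk] G //=.
by congr (_ * _); apply: eq_bigr => h _; rewrite IHk.
Qed.

Lemma coin_mean_eq_seq s : coin_mean (size s) (fun r => (r == s)%:R) = 2^-1 ^+ size s.
Proof.
elim: s => [|x s IHs] //=.
have coin_mean_cons h : coin_mean (size s) (fun r => (h :: r == x :: s)%:R) =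
                        (h == x)%:R * 2^-1 ^+ size s.
  rewrite -IHs -coin_meanZ; apply: eq_coin_mean => r.
  by rewrite eqseq_cons; case: (h == x); rewrite ?mul1r ?mul0r.
by rewrite big_bool !coin_mean_cons exprS; case: x {coin_mean_cons} => /=; ring.
Qed.

End CoinMean.

Section BoxMean.
Variables (R : realType) (P : box R).

Fixpoint box_mean (N : nat) (xa yb : seq bool -> bool)
    (F : seq bool -> seq bool -> R) : R :=
  if N is N'.+1 then
    \sum_(a : bool) \sum_(b : bool) P a b (xa [::]) (yb [::]) *
      box_mean N' (fun l => xa (a :: l)) (fun l => yb (b :: l))
        (fun la lb => F (a :: la) (b :: lb))
  else F [::] [::].

Lemma box_mean_ext N xa xa' yb yb' F F' :
  (forall l, (size l < N)%N -> xa l = xa' l) ->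
  (forall l, (size l < N)%N -> yb l = yb' l) ->
  (forall a b, size a = N -> size b = N -> F a b = F' a b) ->
  box_mean N xa yb F = box_mean N xa' yb' F'.
Proof.
elim: N xa xa' yb yb' F F' => [|N IHN] xa xa' yb yb' F F' eq_xa eq_yb eqF /=.
  exact: eqF.
rewrite eq_xa // eq_yb //; apply: eq_bigr => a _; apply: eq_bigr => b _.
congr (_ * _); apply: IHN => [l|l|la lb size_la size_lb].
- by move=> size_l; apply: eq_xa.
- by move=> size_l; apply: eq_yb.
- by apply: eqF; rewrite /= ?size_la ?size_lb.
Qed.

Lemma eq_box_mean N xa yb F F' :
  (forall a b, F a b = F' a b) -> box_mean N xa yb F = box_mean N xa yb F'.
Proof. by move=> eqF; apply: box_mean_ext. Qed.

Lemma box_meanD N xa yb F G :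
  box_mean N xa yb (fun a b => F a b + G a b) = box_mean N xa yb F + box_mean N xa yb G.
Proof.
elim: N xa yb F G => [|N IHN] xa yb F G //=.
rewrite -big_split; apply: eq_bigr => a _; rewrite -big_split; apply: eq_bigr => b _.
by rewrite IHN mulrDr.
Qed.

Lemma box_meanZ N xa yb c F :
  box_mean N xa yb (fun a b => c * F a b) = c * box_mean N xa yb F.
Proof.
elim: N xa yb F => [|N IHN] xa yb F //=.
rewrite mulr_sumr; apply: eq_bigr => a _; rewrite mulr_sumr; apply: eq_bigr => b _.
by rewrite IHN mulrCA.
Qed.

Lemma box_mean_cat N1 N2 xa yb F :
  box_mean (N1 + N2) xa yb F =
  box_mean N1 xa yb (fun a1 b1 =>
    box_mean N2 (fun l => xa (a1 ++ l)) (fun l => yb (b1 ++ l))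
      (fun a2 b2 => F (a1 ++ a2) (b1 ++ b2))).
Proof.
elim: N1 xa yb F => [|N1 IHN] xa yb F //=.
by apply: eq_bigr => a _; apply: eq_bigr => b _; rewrite IHN.
Qed.

Lemma coin_mean_box_mean k N xa yb F :
  coin_mean k (fun r => box_mean N xa yb (F r)) =
  box_mean N xa yb (fun a b => coin_mean k (fun r => F r a b)).
Proof.
elim: k F => [|k IHk] F //=.
rewrite big_bool /= !IHk -box_meanD -box_meanZ; apply: eq_box_mean => a b.
by rewrite big_bool.
Qed.

Hypothesis P_ge0 : forall a b x y, 0 <= P a b x y.
Hypothesis P_sum1 : forall x y, \sum_(a : bool) \sum_(b : bool) P a b x y = 1.

Lemma box_mean1 N xa yb : box_mean N xa yb (fun _ _ => 1) = 1.
Proof.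
elim: N xa yb => [|N IHN] xa yb //=.
rewrite -[RHS](P_sum1 (xa [::]) (yb [::])); apply: eq_bigr => a _.
by apply: eq_bigr => b _; rewrite IHN mulr1.
Qed.

Lemma box_mean_ge0 N xa yb F : (forall a b, 0 <= F a b) -> 0 <= box_mean N xa yb F.
Proof.
elim: N xa yb F => [|N IHN] xa yb F F_ge0 //=.
by apply: sumr_ge0 => a _; apply: sumr_ge0 => b _; rewrite mulr_ge0 ?IHN.
Qed.

Lemma eta_bound x y : -1 <= Defs.eta P x y <= 1.
Proof.
move: (P_sum1 x y) (P_ge0 false false x y) (P_ge0 false true x y)
  (P_ge0 true false x y) (P_ge0 true true x y).
by rewrite /Defs.eta !big_bool; case: x; case: y => /= *; apply/andP; split; lra.
Qed.

Lemma box_sign_mean x y :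
  \sum_(a : bool) \sum_(b : bool) P a b x y * (-1) ^+ (a (+) b) =
  (-1) ^+ (x && y) * Defs.eta P x y.
Proof.
move: (P_sum1 x y); rewrite /Defs.eta !big_bool.
by case: x; case: y => /= sum1; lra.
Qed.

Lemma box_mean2_sign x1 y1 x2 y2 :
  box_mean 2 (fun l => if l is [::] then x1 else x2)
             (fun l => if l is [::] then y1 else y2)
    (fun a b => (-1) ^+ (nth false a 0 (+) nth false b 0) *
                (-1) ^+ (nth false a 1 (+) nth false b 1)) =
  (-1) ^+ (x1 && y1) * Defs.eta P x1 y1 * ((-1) ^+ (x2 && y2) * Defs.eta P x2 y2).
Proof.
rewrite /= -!box_sign_mean mulr_suml; apply: eq_bigr => a1 _.
rewrite mulr_suml; apply: eq_bigr => b1 _; rewrite -mulrA; congr (_ * _).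
rewrite mulr_sumr; apply: eq_bigr => a2 _; rewrite mulr_sumr; apply: eq_bigr => b2 _.
by rewrite /=; ring.
Qed.

End BoxMean.

(** * The AND gate and the amplification map *)

Section AndGate.
Variables (R : realType) (P : box R).

(* Shares s_i (Alice) and t_i (Bob) of e_i = s_i (+) t_i give shares
   uA (+) uB = e1 (+) e2 and vA (+) vB = e1 (+) e3; the AND of these is
   uA vA (+) uB vB (+) uA vB (+) vA uB, and the two cross terms are computed by
   two boxes whose inputs are one-time padded with the shared coins rho. *)
Definition gate_alice (s1 s2 s3 : bool) (rho l : seq bool) : bool :=
  if l is [::] then s1 (+) s2 (+) nth false rho 0 else s1 (+) s3 (+) nth false rho 1.

Definition gate_bob (t1 t2 t3 : bool) (rho l : seq bool) : bool :=
  if l is [::] then t1 (+) t3 (+) nth false rho 1 else t1 (+) t2 (+) nth false rho 0.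

Definition gate_share (s1 s2 s3 : bool) (rho w : seq bool) : bool :=
  s1 (+) (s1 (+) s2 (+) nth false rho 0) && (s1 (+) s3 (+) nth false rho 1)
     (+) nth false w 0 (+) nth false w 1.

Definition gate_bias (u v : bool) : R :=
  coin_mean 2 (fun rho => Defs.eta P (nth false rho 0) (nth false rho 1 (+) v) *
                         Defs.eta P (nth false rho 1) (nth false rho 0 (+) u)).

Hypothesis P_sum1 : forall x y, \sum_(a : bool) \sum_(b : bool) P a b x y = 1.

Lemma gate_sign_mean s1 s2 s3 t1 t2 t3 fv :
  coin_mean 2 (fun rho => box_mean P 2 (gate_alice s1 s2 s3 rho) (gate_bob t1 t2 t3 rho)
    (fun w w' => (-1) ^+ (gate_share s1 s2 s3 rho w (+) gate_share t1 t2 t3 rho w' (+) fv))) =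
  (-1) ^+ (majority (s1 (+) t1) (s2 (+) t2) (s3 (+) t3) (+) fv) *
  gate_bias (s1 (+) t1 (+) (s2 (+) t2)) (s1 (+) t1 (+) (s3 (+) t3)).
Proof.
transitivity (coin_mean 2 (fun rho =>
  (-1) ^+ (majority (s1 (+) t1) (s2 (+) t2) (s3 (+) t3) (+) fv) *
  (Defs.eta P (s1 (+) s2 (+) nth false rho 0) (t1 (+) t3 (+) nth false rho 1) *
   Defs.eta P (s1 (+) s3 (+) nth false rho 1) (t1 (+) t2 (+) nth false rho 0)))).
  apply: eq_coin_mean => rho; rewrite /gate_alice /gate_bob /gate_share.
  move: (nth false rho 0) (nth false rho 1) => r0 r1.
  have signE w w' :
    (-1) ^+ (s1 (+) (s1 (+) s2 (+) r0) && (s1 (+) s3 (+) r1) (+) nth false w 0 (+) nth false w 1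
      (+) (t1 (+) (t1 (+) t2 (+) r0) && (t1 (+) t3 (+) r1) (+) nth false w' 0 (+) nth false w' 1)
      (+) fv) =
    (-1) ^+ (s1 (+) (s1 (+) s2 (+) r0) && (s1 (+) s3 (+) r1)
      (+) (t1 (+) (t1 (+) t2 (+) r0) && (t1 (+) t3 (+) r1)) (+) fv) *
    ((-1) ^+ (nth false w 0 (+) nth false w' 0) * (-1) ^+ (nth false w 1 (+) nth false w' 1)) :> R.
    by rewrite !signr_addb; ring.
  rewrite (@eq_box_mean _ P 2 _ _ _ _ signE) box_meanZ box_mean2_sign //.
  by rewrite (majority_shares s1 s2 s3 t1 t2 t3 r0 r1) !signr_addb; ring.
rewrite coin_meanZ; congr (_ * _).
rewrite /gate_bias /= !big_bool /=.
by case: s1; case: s2; case: s3; case: t1; case: t2; case: t3 => /=; ring.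
Qed.

End AndGate.

Section Amplification.
Variables (R : realType) (P : box R).

Definition amplify (d : R) : R :=
  d * ((quantA P + quantB P) / 16 - (quantA P - quantB P) / 16 * d ^+ 2).

Lemma gate_bias00 : gate_bias P false false = quantB P / 8.
Proof. by rewrite /gate_bias /quantB /= !big_bool /=; field. Qed.

Lemma gate_bias_sum :
  gate_bias P false false + gate_bias P false true + gate_bias P true false +
  gate_bias P true true = quantA P / 4.
Proof. by rewrite /gate_bias /quantA /= !big_bool /=; field. Qed.

Hypothesis P_ge0 : forall a b x y, 0 <= P a b x y.
Hypothesis P_sum1 : forall x y, \sum_(a : bool) \sum_(b : bool) P a b x y = 1.

Lemma quantA_le16 : quantA P <= 16.
Proof.
have := eta_bound P_ge0 P_sum1 false false; have := eta_bound P_ge0 P_sum1 false true.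
have := eta_bound P_ge0 P_sum1 true false; have := eta_bound P_ge0 P_sum1 true true.
rewrite /quantA; move: (Defs.eta P _ _) (Defs.eta P _ _) (Defs.eta P _ _) (Defs.eta P _ _).
move=> e1 e2 e3 e4 /andP[? ?] /andP[? ?] /andP[? ?] /andP[? ?].
rewrite expr2; nra.
Qed.

Lemma amplify_dichotomy :
  16 < quantA P + quantB P ->
  exists kap c : R, 1 < kap /\ 0 < c /\ forall d, 0 < d <= 1 ->
    c <= amplify d \/ kap * d <= amplify d.
Proof.
move=> AB_gt16; apply: cubic_dichotomy; first lra.
have := quantA_le16; lra.
Qed.

End Amplification.

(** * Protocols producing XOR shares *)

Section XorProtocol.
Variables (R : realType) (P : box R) (TX TY : Type).

(* Each party ends with a bit, its share; its box inputs and its share are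
   functions of its own input, the shared coins [r] and its own box outputs [l]
   so far. *)
Record xor_protocol := XorProtocol {
  alice_box : TX -> seq bool -> seq bool -> bool;
  bob_box : TY -> seq bool -> seq bool -> bool;
  alice_share : TX -> seq bool -> seq bool -> bool;
  bob_share : TY -> seq bool -> seq bool -> bool }.

Definition xor_mean (D : xor_protocol) N k X Y (F : bool -> R) : R :=
  coin_mean k (fun r => box_mean P N (alice_box D X r) (bob_box D Y r)
    (fun a b => F (alice_share D X r a (+) bob_share D Y r b))).

Definition xor_prob D N k X Y e := xor_mean D N k X Y (fun z => (z == e)%:R).

Definition xor_bias D N k X Y fv := xor_mean D N k X Y (fun z => (-1) ^+ (z (+) fv)).

Lemma xor_meanE D N k X Y F :
  xor_mean D N k X Y F = \sum_(e : bool) F e * xor_prob D N k X Y e.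
Proof.
rewrite /xor_prob /xor_mean big_bool /= -!coin_meanZ -coin_meanD; apply: eq_coin_mean => r.
rewrite -!box_meanZ -box_meanD; apply: eq_box_mean => a b.
by case: (_ (+) _) => /=; ring.
Qed.

Lemma xor_biasE D N k X Y fv :
  xor_bias D N k X Y fv = xor_prob D N k X Y fv - xor_prob D N k X Y (~~ fv).
Proof. by rewrite /xor_bias xor_meanE big_bool; case: fv => /=; ring. Qed.

Hypothesis P_ge0 : forall a b x y, 0 <= P a b x y.
Hypothesis P_sum1 : forall x y, \sum_(a : bool) \sum_(b : bool) P a b x y = 1.

Lemma xor_prob_sum D N k X Y fv :
  xor_prob D N k X Y fv + xor_prob D N k X Y (~~ fv) = 1.
Proof.
have sum1 : xor_prob D N k X Y true + xor_prob D N k X Y false = 1.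
  have := xor_meanE D N k X Y (fun _ => 1); rewrite big_bool /= !mul1r => <-.
  rewrite -[RHS](coin_mean_cst k 1); apply: eq_coin_mean => r.
  exact: box_mean1.
by case: fv => //=; rewrite addrC.
Qed.

Lemma xor_probE D N k X Y fv :
  xor_prob D N k X Y fv = (1 + xor_bias D N k X Y fv) / 2.
Proof. by rewrite xor_biasE; have := xor_prob_sum D N k X Y fv; lra. Qed.

Lemma xor_bias_le1 D N k X Y fv : xor_bias D N k X Y fv <= 1.
Proof.
have q_ge0 : 0 <= xor_prob D N k X Y (~~ fv).
  apply: coin_mean_ge0 => r; apply: box_mean_ge0 => // a b; exact: ler0n.
by rewrite xor_biasE; have := xor_prob_sum D N k X Y fv; lra.
Qed.

Definition guess_leaf m (fA : TX -> seq bool -> bool) (code : TY -> seq bool) :=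
  XorProtocol (fun _ _ _ => false) (fun _ _ _ => false)
    (fun X r _ => fA X (take m r)) (fun Y r _ => (take m r != code Y) && nth false r m).

Lemma guess_leaf_bias m fA code X Y :
  size (code Y) = m ->
  xor_bias (guess_leaf m fA code) 0 (m + 1) X Y (fA X (code Y)) = 2^-1 ^+ m.
Proof.
move=> size_code; rewrite /xor_bias /xor_mean coin_mean_cat.
transitivity (coin_mean m (fun r => (r == code Y)%:R : R)); last first.
  by rewrite -size_code coin_mean_eq_seq.
apply: coin_mean_ext => r size_r.
rewrite /= !big_bool /= !take_size_cat // !nth_cat size_r ltnn subnn /=.
case: eqP => [->|_] /=; first by rewrite addbF addbb /=; field.
by case: (fA X r); case: (fA X (code Y)) => /=; field.
Qed.

End XorProtocol.

Lemma size_cat_ltnF (T : Type) (s1 s2 : seq T) n :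
  size s1 = n -> (size (s1 ++ s2) < n)%N = false.
Proof. by move=> <-; rewrite size_cat ltnNge leq_addr. Qed.

Ltac block_simpl := repeat first
  [ rewrite size_cat_ltnF; [|by []]
  | rewrite drop_size_cat; [|by []]
  | rewrite take_size_cat; [|by []] ].

Section Majority.
Variables (R : realType) (P : box R) (TX TY : Type) (N k : nat).

(* Coins and box outputs are consumed in three blocks of k coins and N boxes,
   one for each independent copy of the protocol, followed by the two coins
   and the two boxes of the AND gate. *)
Definition maj3_box T (box share : T -> seq bool -> seq bool -> bool)
    (gate : bool -> bool -> bool -> seq bool -> seq bool -> bool) (X : T) (r l : seq bool) :=
  let r2 := drop k r in let r3 := drop k r2 in
  let l2 := drop N l in let l3 := drop N l2 in
  if (size l < N)%N then box X (take k r) l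
  else if (size l2 < N)%N then box X (take k r2) l2
  else if (size l3 < N)%N then box X (take k r3) l3
  else gate (share X (take k r) (take N l)) (share X (take k r2) (take N l2))
            (share X (take k r3) (take N l3)) (drop k r3) (drop N l3).

Definition maj3_share T (share : T -> seq bool -> seq bool -> bool) (X : T) (r l : seq bool) :=
  let r2 := drop k r in let r3 := drop k r2 in
  let l2 := drop N l in let l3 := drop N l2 in
  gate_share (share X (take k r) (take N l)) (share X (take k r2) (take N l2))
             (share X (take k r3) (take N l3)) (drop k r3) (drop N l3).

Definition maj3 (D : xor_protocol TX TY) : xor_protocol TX TY :=
  XorProtocol (maj3_box (alice_box D) (alice_share D) gate_alice)
              (maj3_box (bob_box D) (bob_share D) gate_bob)
              (maj3_share (alice_share D)) (maj3_share (bob_share D)).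

Lemma maj3_bias_blocks D X Y fv :
  xor_bias P (maj3 D) (N + (N + (N + 2))) (k + (k + (k + 2))) X Y fv =
  coin_mean k (fun r1 => coin_mean k (fun r2 => coin_mean k (fun r3 => coin_mean 2 (fun rho =>
  box_mean P N (alice_box D X r1) (bob_box D Y r1) (fun a1 b1 =>
  box_mean P N (alice_box D X r2) (bob_box D Y r2) (fun a2 b2 =>
  box_mean P N (alice_box D X r3) (bob_box D Y r3) (fun a3 b3 =>
  let s1 := alice_share D X r1 a1 in let t1 := bob_share D Y r1 b1 in
  let s2 := alice_share D X r2 a2 in let t2 := bob_share D Y r2 b2 in
  let s3 := alice_share D X r3 a3 in let t3 := bob_share D Y r3 b3 in
  box_mean P 2 (gate_alice s1 s2 s3 rho) (gate_bob t1 t2 t3 rho) (fun w w' =>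
    (-1) ^+ (gate_share s1 s2 s3 rho w (+) gate_share t1 t2 t3 rho w' (+) fv))))))))).
Proof.
rewrite /xor_bias /xor_mean coin_mean_cat; apply: coin_mean_ext => r1 size_r1.
rewrite coin_mean_cat; apply: coin_mean_ext => r2 size_r2.
rewrite coin_mean_cat; apply: coin_mean_ext => r3 size_r3.
apply: coin_mean_ext => rho size_rho.
rewrite box_mean_cat; apply: box_mean_ext => [l size_l|l size_l|a1 b1 size_a1 size_b1].
- by rewrite /= /maj3_box /= size_l; block_simpl.
- by rewrite /= /maj3_box /= size_l; block_simpl.
rewrite box_mean_cat; apply: box_mean_ext => [l size_l|l size_l|a2 b2 size_a2 size_b2].
- by rewrite /= /maj3_box /=; block_simpl; rewrite size_l; block_simpl.
- by rewrite /= /maj3_box /=; block_simpl; rewrite size_l; block_simpl.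
rewrite box_mean_cat; apply: box_mean_ext => [l size_l|l size_l|a3 b3 size_a3 size_b3].
- by rewrite /= /maj3_box /=; block_simpl; rewrite size_l; block_simpl.
- by rewrite /= /maj3_box /=; block_simpl; rewrite size_l; block_simpl.
by apply: box_mean_ext => [l _|l _|w w' _ _]; rewrite /= /maj3_box /maj3_share /=; block_simpl.
Qed.

Hypothesis P_sum1 : forall x y, \sum_(a : bool) \sum_(b : bool) P a b x y = 1.

Lemma maj3_bias_xor_mean D X Y fv :
  xor_bias P (maj3 D) (N + (N + (N + 2))) (k + (k + (k + 2))) X Y fv =
  xor_mean P D N k X Y (fun e1 => xor_mean P D N k X Y (fun e2 => xor_mean P D N k X Y (fun e3 =>
    (-1) ^+ (majority e1 e2 e3 (+) fv) * gate_bias P (e1 (+) e2) (e1 (+) e3)))).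
Proof.
rewrite maj3_bias_blocks; apply: eq_coin_mean => r1.
under eq_coin_mean => r2 do under eq_coin_mean => r3 do rewrite coin_mean_box_mean.
under eq_coin_mean => r2 do rewrite coin_mean_box_mean.
rewrite coin_mean_box_mean; apply: eq_box_mean => a1 b1; apply: eq_coin_mean => r2.
under eq_coin_mean => r3 do rewrite coin_mean_box_mean.
rewrite coin_mean_box_mean; apply: eq_box_mean => a2 b2; apply: eq_coin_mean => r3.
rewrite coin_mean_box_mean; apply: eq_box_mean => a3 b3.
exact: (gate_sign_mean P_sum1).
Qed.

Lemma maj3_bias D X Y fv :
  xor_bias P (maj3 D) (N + (N + (N + 2))) (k + (k + (k + 2))) X Y fv =
  amplify P (xor_bias P D N k X Y fv).
Proof.
pose q := xor_prob P D N k X Y.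
transitivity (\sum_(e1 : bool) \sum_(e2 : bool) \sum_(e3 : bool)
  (-1) ^+ (majority e1 e2 e3 (+) fv) * gate_bias P (e1 (+) e2) (e1 (+) e3) * (q e1 * q e2 * q e3)).
  rewrite maj3_bias_xor_mean xor_meanE; apply: eq_bigr => e1 _.
  rewrite xor_meanE mulr_suml; apply: eq_bigr => e2 _.
  rewrite xor_meanE !mulr_suml; apply: eq_bigr => e3 _.
  by rewrite /q; ring.
have gate_bias_rest : gate_bias P false true + gate_bias P true false + gate_bias P true true =
                      quantA P / 4 - quantB P / 8.
  by rewrite -gate_bias_sum gate_bias00; ring.
rewrite majority_sign_mean ?xor_prob_sum // -xor_biasE gate_bias_rest gate_bias00.
by rewrite /amplify; field.
Qed.

End Majority.

(** * The protocols of the statement *)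

Section FfunSeq.
Variable T : Type.

Definition ffun_cons N (h : T) (t : {ffun 'I_N -> T}) : {ffun 'I_N.+1 -> T} :=
  [ffun j => if unlift ord0 j is Some j' then t j' else h].

Lemma codom_ffun_cons N h (t : {ffun 'I_N -> T}) : codom (ffun_cons h t) = h :: codom t.
Proof.
rewrite /codom /image_mem enum_ordSl /= ffunE unlift_none -map_comp; congr cons.
by apply: eq_map => j /=; rewrite ffunE liftK.
Qed.

Lemma size_codom_ord N (v : 'I_N -> T) : size (codom v) = N.
Proof. by rewrite size_codom card_ord. Qed.

Lemma codom_ord0 (v : 'I_0 -> T) : codom v = [::].
Proof. by apply/size0nil; rewrite size_codom_ord. Qed.

Lemma nth_codom_ord N x0 (v : 'I_N -> T) (j : 'I_N) : nth x0 (codom v) j = v j.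
Proof. by rewrite /codom /image_mem (nth_map j) ?size_enum_ord // nth_ord_enum. Qed.

End FfunSeq.

Lemma sum_ffunS (R : nmodType) (T : finType) N (G : {ffun 'I_N.+1 -> T} -> R) :
  \sum_(v : {ffun 'I_N.+1 -> T}) G v =
  \sum_(h : T) \sum_(t : {ffun 'I_N -> T}) G (ffun_cons h t).
Proof.
rewrite pair_big /= (reindex (fun p : T * {ffun 'I_N -> T} => ffun_cons p.1 p.2)) //=.
exists (fun v => (v ord0, [ffun j => v (lift ord0 j)])) => [[h t] _|v _] /=.
  rewrite /ffun_cons ffunE unlift_none; congr pair; apply/ffunP => j.
  by rewrite !ffunE liftK.
by apply/ffunP => j; rewrite /ffun_cons ffunE; case: unliftP => [j' ->|->]; rewrite ?ffunE.
Qed.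

Lemma sum_ffun0 (R : nmodType) (T : finType) (x0 : T) (G : {ffun 'I_0 -> T} -> R) :
  \sum_(v : {ffun 'I_0 -> T}) G v = G [ffun => x0].
Proof. by rewrite (big_pred1 [ffun => x0]) // => v /=; apply/esym/eqP/ffunP => -[]. Qed.

Lemma take_codom_trunc N i (v : outvec N) : take i (codom (trunc i v)) = take i (codom v).
Proof.
apply: (@eq_from_nth _ false); first by rewrite !size_take !size_codom_ord.
move=> j; rewrite size_take size_codom_ord => j_lt.
have [j_lt_i j_lt_N] : (j < i)%N /\ (j < N)%N.
  move: j_lt; case: (ltnP i N) => [i_lt_N|N_le_i] j_lt; split=> //.
  - exact: ltn_trans j_lt i_lt_N.
  - exact: leq_trans j_lt N_le_i.
rewrite !nth_take // -[j]/(nat_of_ord (Ordinal j_lt_N)) !nth_codom_ord ffunE /=.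
by rewrite j_lt_i.
Qed.

Section ProductFormula.
Variables (R : realType) (P : box R).

Lemma sum_ffun_box_mean N xa yb (F : seq bool -> seq bool -> R) :
  \sum_(b : outvec N) \sum_(a : outvec N)
    (\prod_(i < N) P (a i) (b i) (xa (take i (codom a))) (yb (take i (codom b)))) *
    F (codom a) (codom b)
  = box_mean P N xa yb F.
Proof.
elim: N xa yb F => [|N IHN] xa yb F.
  by rewrite !(sum_ffun0 false) big_ord0 mul1r !codom_ord0.
transitivity (\sum_(hb : bool) \sum_(tb : outvec N) \sum_(ha : bool) \sum_(ta : outvec N)
   P ha hb (xa [::]) (yb [::]) *
   ((\prod_(i < N) P (ta i) (tb i) (xa (ha :: take i (codom ta))) (yb (hb :: take i (codom tb))))
     * F (ha :: codom ta) (hb :: codom tb))).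
  rewrite sum_ffunS; apply: eq_bigr => hb _; apply: eq_bigr => tb _.
  rewrite sum_ffunS; apply: eq_bigr => ha _; apply: eq_bigr => ta _.
  rewrite big_ord_recl !codom_ffun_cons !ffunE unlift_none mulrA; congr (_ * _ * _).
  by apply: eq_bigr => i _; rewrite !ffunE liftK lift0.
under eq_bigr => hb _ do rewrite exchange_big.
rewrite exchange_big /=; apply: eq_bigr => ha _; apply: eq_bigr => hb _.
rewrite -IHN mulr_sumr; apply: eq_bigr => tb _; rewrite mulr_sumr.
by apply: eq_bigr => ta _.
Qed.

Lemma sum_ffun_coin_mean k (G : seq bool -> R) :
  (2 ^+ k)^-1 * \sum_(r : {ffun 'I_k -> bool}) G (codom r) = coin_mean k G.
Proof.
elim: k G => [|k IHk] G.
  by rewrite (sum_ffun0 false) expr0 invr1 mul1r codom_ord0.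
rewrite sum_ffunS /= exprS invfM -mulrA mulr_sumr; congr (_ * _).
apply: eq_bigr => h _; rewrite -(IHk (fun r => G (h :: r))); congr (_ * _).
by apply: eq_bigr => t _; rewrite codom_ffun_cons.
Qed.

End ProductFormula.

Section MajorityTree.
Variables (n m : nat) (f : {ffun 'I_n -> bool} -> {ffun 'I_m -> bool} -> bool).

Definition ffun_of_seq (l : seq bool) : {ffun 'I_m -> bool} := [ffun j : 'I_m => nth false l j].

Lemma ffun_of_seqK (Y : {ffun 'I_m -> bool}) : ffun_of_seq (codom Y) = Y.
Proof. by apply/ffunP => j; rewrite ffunE nth_codom_ord. Qed.

Fixpoint tree_boxes d : nat :=
  if d is d'.+1 then let N := tree_boxes d' in N + (N + (N + 2)) else 0.

Fixpoint tree_coins d : nat :=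
  if d is d'.+1 then let k := tree_coins d' in k + (k + (k + 2)) else m + 1.

Fixpoint maj_tree d : xor_protocol {ffun 'I_n -> bool} {ffun 'I_m -> bool} :=
  if d is d'.+1 then maj3 (tree_boxes d') (tree_coins d') (maj_tree d')
  else guess_leaf m (fun X l => f X (ffun_of_seq l)) (fun Y : {ffun 'I_m -> bool} => codom Y).

Definition one_bit_protocol (D : xor_protocol {ffun 'I_n -> bool} {ffun 'I_m -> bool}) N k :
    protocol n m N k :=
  Protocol (fun Y r i b => bob_box D Y (codom r) (take i (codom b)))
           (fun Y r b => bob_share D Y (codom r) (codom b))
           (fun X r _ i a => alice_box D X (codom r) (take i (codom a)))
           (fun X r c a => alice_share D X (codom r) (codom a) (+) c).

Variables (R : realType) (P : box R).

Lemma success_prob_one_bit D N k X Y :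
  success_prob P f (one_bit_protocol D N k) X Y = xor_prob P D N k X Y (f X Y).
Proof.
rewrite /success_prob /xor_prob /xor_mean /= -sum_ffun_coin_mean; congr (_ * _).
apply: eq_bigr => r _; rewrite -sum_ffun_box_mean.
apply: eq_bigr => b _; apply: eq_bigr => a _; congr (_ * _).
  by apply: eq_bigr => i _; rewrite !take_codom_trunc.
by case: (_ == _).
Qed.

Lemma maj_tree0_bias X Y :
  xor_bias P (maj_tree 0) (tree_boxes 0) (tree_coins 0) X Y (f X Y) = 2^-1 ^+ m.
Proof.
have -> : f X Y = f X (ffun_of_seq (codom Y)) by rewrite ffun_of_seqK.
by apply: guess_leaf_bias; rewrite size_codom_ord.
Qed.

End MajorityTree.

Theorem theorem1 (R : realType) (P : box R) :
  is_nonlocal_box P ->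
  16 < quantA P + quantB P ->
  exists p : R, 2^-1 < p /\
    forall (n m : nat), (0 < n)%N -> (0 < m)%N ->
    forall f : {ffun 'I_n -> bool} -> {ffun 'I_m -> bool} -> bool,
      CC_le_one P p f.
Proof.
move=> [P_ge0 [P_sum1 _]] AB_gt16.
have [kap [c [kap_gt1 [c_gt0 amplify_dich]]]] := amplify_dichotomy P_ge0 P_sum1 AB_gt16.
exists ((1 + c) / 2); split; first lra.
move=> n m _ _ f.
have [d c_le_kap_d] : exists d, c * 2 ^+ m <= kap ^+ d.
  by apply: expr_unbounded => //; rewrite mulr_ge0 ?exprn_ge0 //; lra.
exists (tree_boxes d), (tree_coins m d), (one_bit_protocol (maj_tree f d) _ _) => X Y.
rewrite success_prob_one_bit (xor_probE P_sum1).
suff : c <= xor_bias P (maj_tree f d) (tree_boxes d) (tree_coins m d) X Y (f X Y) by lra.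
apply: (iterate_escape kap_gt1 c_gt0 amplify_dich
  (u := fun j => xor_bias P (maj_tree f j) (tree_boxes j) (tree_coins m j) X Y (f X Y))).
- by rewrite maj_tree0_bias exprn_gt0 // invr_gt0.
- by move=> j; apply: (maj3_bias _ _ P_sum1).
- by move=> j; apply: (xor_bias_le1 P_ge0 P_sum1).
by rewrite maj_tree0_bias -ler_pdivrMr ?exprn_gt0 ?invr_gt0 // exprVn invrK.
Qed.
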